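(* Let $S$ be as in the context. For every path $p$ from the root to a leaf in $\mathcal{T}(S)$ there is exactly one node $\phi$ on $p$ such that (1) $\phi$ has a unique Weiner link, (2) every ancestor of $\phi$ on $p$ has multiple Weiner links, and (3) every node in the subtree rooted at $\phi$ has a unique Weiner link.
   Context: $\Sigma$ is a finite totally ordered alphabet containing a symbol $\$$ smaller than every other symbol. $S$ is a string of length $n\ge 2$ over $\Sigma$ whose last character is $\$$ and in which $\$$ occurs nowhere else. The rotations of $S$ are the $n$ strings $S[i..n]S[1..i-1]$, $i\in[1,n]$. The rotation-trie $\mathcal{T}(S)$ is the trie of the set of rotations of $S$ (a rooted tree with single-character edge labels, children of a node having distinct labels, ordered by increasing label). The label $l(\phi)$ of a node is the concatenation of edge labels on the root-to-$\phi$ path; leaves are the $n$ nodes with $|l(\phi)|=n$. A triple $(\phi,\varphi,c)$ with $\phi,\varphi$ nodes and $c\in\Sigma$ is a Weiner link of $\phi$ if $l(\varphi)=c\,l(\phi)$, or $|l(\phi)|=n$ and $l(\varphi)=c\,l(\phi)[1..n-1]$. A node $\phi$ has a unique Weiner link if all of its Weiner links have the same target node $\varphi$ (every node has at least one Weiner link); otherwise $\phi$ has multiple Weiner links. *)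

From HB Require Import structures.
From mathcomp Require Import all_boot all_order.
Set Implicit Arguments. Unset Strict Implicit. Unset Printing Implicit Defensive.
Import Order.TTheory.
Local Open Scope order_scope.

Section RotationTrie.
Variables (d : Order.disp_t) (A : finOrderType d).

(* The n rotations S[i..n]S[1..i-1], i in [1,n]  (rot i S, i in [0,n-1]). *)
Definition rotations (S : seq A) : seq (seq A) :=
  [seq rot i S | i <- iota 0 (size S)].

(* Nodes of the rotation-trie T(S) are identified with their labels l(phi):
   the prefixes (including the empty one = root) of the rotations of S. *)
Definition is_node (S : seq A) (w : seq A) : bool :=
  has (fun r => prefix w r) (rotations S).

Definition is_leaf (S : seq A) (w : seq A) : bool :=
  is_node S w && (size w == size S).

Definition weiner_link (S : seq A) (phi vphi : seq A) (c : A) : Prop :=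
  [/\ is_node S phi, is_node S vphi &
      (vphi = c :: phi \/
       (size phi = size S /\ vphi = c :: take (size S).-1 phi))].

Definition unique_weiner (S : seq A) (phi : seq A) : Prop :=
  forall v1 v2 c1 c2, weiner_link S phi v1 c1 -> weiner_link S phi v2 c2 -> v1 = v2.

Definition multiple_weiner (S : seq A) (phi : seq A) : Prop :=
  ~ unique_weiner S phi.

Definition valid_text (dollar : A) (S : seq A) : Prop :=
  [/\ (forall a : A, a != dollar -> dollar < a),
      (2 <= size S)%N,
      last dollar S = dollar & count_mem dollar S = 1%N].

End RotationTrie.

From mathcomp Require Import all_boot all_order.
From Stdlib Require Import ClassicalEpsilon.

(* Having a unique Weiner link is inherited by descendants: a Weiner link
   (psi, v, c) of a proper descendant psi of phi yields the Weiner link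
   (phi, c phi, c), so the letter c, and with it the target v, is determined
   by phi.  Every leaf has a unique Weiner link, because each target is a
   rotation of S, hence a permutation of S, and the targets only differ in
   their first letter.  So along a root-to-leaf path the nodes with a unique
   Weiner link form a nonempty final segment, whose first node is the
   required phi. *)

Set Implicit Arguments. Unset Strict Implicit. Unset Printing Implicit Defensive.

Section ShortestPrefix.
Variable T : eqType.
Implicit Types s t u : seq T.

Lemma prefix_size_eq s t : prefix s t -> size s = size t -> s = t.
Proof. by rewrite prefixE => /eqP E es; rewrite -E es take_size. Qed.

Lemma prefix_take_leq s t k : prefix s t -> (size s <= k)%N -> prefix s (take k t).
Proof. by rewrite !prefixE => /eqP E le_sk; rewrite take_takel // E. Qed.

Lemma exists_unique_shortest_prefix (P : seq T -> Prop) s : P s ->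
  exists! t, [/\ prefix t s, P t &
                 forall u, prefix u s -> (size u < size t)%N -> ~ P u].
Proof.
move=> Ps.
pose Pk k : bool := excluded_middle_informative (P (take k s)).
have PkE k : Pk k <-> P (take k s) by rewrite /Pk; case: excluded_middle_informative.
have [|m /PkE Pm min_m] := @ex_minnP Pk; first by exists (size s); apply/PkE; rewrite take_size.
have le_ms : (m <= size s)%N by apply: min_m; apply/PkE; rewrite take_size.
have size_m : size (take m s) = m by rewrite size_takel.
have shorter_notP u : prefix u s -> (size u < m)%N -> ~ P u.
  rewrite prefixE => /eqP E lt_um Pu.
  suff /min_m : Pk (size u) by rewrite leqNgt lt_um.
  by apply/PkE; rewrite E.
exists (take m s); split; first by split; rewrite ?size_m //; apply: prefix_take.
move=> t [pre_t Pt min_t]; have [lt_tm|lt_mt|eq_tm] := ltngtP (size t) m.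
- by case: (shorter_notP _ pre_t lt_tm).
- by case: (min_t _ (prefix_take _ _) _ Pm); rewrite size_m.
- by move: pre_t; rewrite prefixE eq_tm => /eqP.
Qed.

End ShortestPrefix.

Section RotationTrie.
Variables (d : Order.disp_t) (A : finOrderType d).
Implicit Types (S phi psi v : seq A) (c : A).

Lemma is_node_size S phi : is_node S phi -> (size phi <= size S)%N.
Proof. by case/hasP=> _ /mapP [i _ ->] /size_prefix; rewrite size_rot. Qed.

Lemma is_node_prefix S phi psi : prefix phi psi -> is_node S psi -> is_node S phi.
Proof. by move=> pre /hasP [r r_rot pre_r]; apply/hasP; exists r; last exact: prefix_trans pre_r. Qed.

Lemma weiner_link_target S phi v c : weiner_link S phi v c ->
  v = if size phi == size S then c :: take (size S).-1 phi else c :: phi.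
Proof.
case=> _ node_v [v_def|[-> ->]]; last by rewrite eqxx.
move/is_node_size: node_v; rewrite v_def /= => lt_phi.
by rewrite ifN // neq_ltn lt_phi.
Qed.

Lemma weiner_link_ancestor S phi psi v c : weiner_link S psi v c ->
  prefix phi psi -> (size phi < size psi)%N -> weiner_link S phi (c :: phi) c.
Proof.
move=> L pre lt_phi_psi; have [node_psi node_v _] := L.
have le_phi : (size phi <= (size S).-1)%N.
  by rewrite -ltnS (leq_trans lt_phi_psi) // (leq_trans (is_node_size node_psi)) // leqSpred.
split; [exact: is_node_prefix node_psi | | by left].
apply: is_node_prefix node_v; rewrite (weiner_link_target L).
by case: ifP => _ /=; rewrite eqxx //=; apply: prefix_take_leq.
Qed.

Lemma unique_weiner_descendant S phi psi : prefix phi psi -> is_node S psi ->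
  unique_weiner S phi -> unique_weiner S psi.
Proof.
move=> pre node_psi U; have [eq_size|neq_size] := eqVneq (size phi) (size psi).
  by rewrite -(prefix_size_eq pre eq_size).
have lt_size : (size phi < size psi)%N by rewrite ltn_neqAle neq_size size_prefix.
move=> v1 v2 c1 c2 L1 L2.
rewrite (weiner_link_target L1) (weiner_link_target L2).
by have [->] := U _ _ _ _ (weiner_link_ancestor L1 pre lt_size)
                          (weiner_link_ancestor L2 pre lt_size).
Qed.

Lemma weiner_link_leaf_perm S phi v c : is_leaf S phi -> weiner_link S phi v c ->
  perm_eq (c :: take (size S).-1 phi) S.
Proof.
case/andP=> _ /eqP size_phi L; have [_ node_v _] := L.
have v_def : v = c :: take (size S).-1 phi by rewrite (weiner_link_target L) size_phi eqxx.
have size_v : size v = size S.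
  move: (is_node_size node_v); rewrite v_def /= size_take size_phi.
  by case: (size S) => //= n; rewrite ltnSn.
case/hasP: node_v => _ /mapP [i _ ->] pre_v.
by rewrite -v_def (prefix_size_eq pre_v) ?size_rot // perm_rot.
Qed.

Lemma unique_weiner_leaf S phi : is_leaf S phi -> unique_weiner S phi.
Proof.
move=> leaf_phi v1 v2 c1 c2 L1 L2.
have P1 := weiner_link_leaf_perm leaf_phi L1.
have P2 := weiner_link_leaf_perm leaf_phi L2.
have : perm_eq [:: c1] [:: c2].
  rewrite -(perm_cat2l (take (size S).-1 phi)).
  by rewrite perm_catC perm_sym perm_catC (perm_trans P2) // perm_sym.
move/perm_mem => /(_ c1); rewrite !inE eqxx => /esym/eqP eq_c.
by rewrite (weiner_link_target L1) (weiner_link_target L2) eq_c.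
Qed.

End RotationTrie.

Theorem mainTheorem4 (d : Order.disp_t) (A : finOrderType d) (dollar : A)
  (S : seq A) :
  valid_text dollar S ->
  forall leaf : seq A, is_leaf S leaf ->
  exists! phi : seq A,
    [/\ prefix phi leaf,
        unique_weiner S phi,
        (forall psi, prefix psi leaf -> (size psi < size phi)%N ->
           multiple_weiner S psi) &
        (forall psi, is_node S psi -> prefix phi psi -> unique_weiner S psi)].
Proof.
(* The argument does not use the assumptions on the sentinel $. *)
move=> _ leaf leaf_leaf.
have [phi [[pre U shorter] phi_unique]] :=
  exists_unique_shortest_prefix (unique_weiner_leaf leaf_leaf).
exists phi; split.
  by split=> // psi node_psi pre_psi; apply: unique_weiner_descendant pre_psi node_psi U.
by move=> phi' [pre' U' shorter' _]; apply: phi_unique.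
Qed.
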